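(* Let $s_j=\sigma_j+it_j\in\mathbb{C}$ ($j=1,2,3$). The double series $\sum_{m=1}^\infty\sum_{n<m}m^{-s_1}n^{-s_2}(m+n)^{-s_3}$ (over positive integers $n<m$) converges absolutely when $\sigma_1+\sigma_3>1$ and $\sigma_1+\sigma_2+\sigma_3>2$. The series $\sum_{k=2}^\infty\left|\sum_{k/2<m\le k-1}m^{-s_1}(k-m)^{-s_2}\right|^2k^{-s_3}$ converges absolutely when $2\sigma_1+\sigma_3>1$ and $2\sigma_1+2\sigma_2+\sigma_3>3$.
   Context: Complex powers $n^{s}=e^{s\log n}$ use the real logarithm of positive integers; $\sigma_j=\Re s_j$. *)

From Stdlib Require Import Reals List Arith.
From Coquelicot Require Import Coquelicot.
Open Scope R_scope.

(* n^s := e^{s log n} for a positive integer n, with the real logarithm;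
   written out as e^{sigma log n} (cos (t log n) + i sin (t log n)). *)
Definition cpow (n : nat) (s : C) : C :=
  (exp (Re s * ln (INR n)) * cos (Im s * ln (INR n)),
   exp (Re s * ln (INR n)) * sin (Im s * ln (INR n))).

Definition sumR (l : list nat) (f : nat -> R) : R :=
  fold_right Rplus 0 (map f l).
Definition sumC (l : list nat) (f : nat -> C) : C :=
  fold_right Cplus (RtoC 0) (map f l).

Definition below (m : nat) : list nat := seq 1 (m - 1).
Definition half_range (k : nat) : list nat :=
  filter (fun m => Nat.ltb k (2 * m)) (seq 1 (k - 1)).

Definition term1 (s1 s2 s3 : C) (m n : nat) : C :=
  Cmult (Cmult (cpow m (Copp s1)) (cpow n (Copp s2))) (cpow (m + n) (Copp s3)).

Definition inner2 (s1 s2 : C) (k : nat) : C :=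
  sumC (half_range k) (fun m => Cmult (cpow m (Copp s1)) (cpow (k - m) (Copp s2))).

Definition term2 (s1 s2 s3 : C) (k : nat) : C :=
  Cmult (RtoC (Cmod (inner2 s1 s2 k) ^ 2)) (cpow k (Copp s3)).

From Stdlib Require Import Reals List Arith Lra Lia.
From Coquelicot Require Import Coquelicot.
Open Scope R_scope.

(* Only the moduli matter: |n^{-s}| = n^{-sigma}.  For m <= N <= 2m the powers
   N^x and m^x agree up to the factor 2^{|x|}, and for n <= m, b <= c one has
   n^{-b} <= n^{-c} m^{c-b}.  Taking 1 < c with sigma_2 <= c, an inner sum over
   n <= m is therefore at most a constant times m^{c - sigma_2} zeta(c), so the
   first series is dominated by sum_m m^{-p} with p = sigma_1+sigma_2+sigma_3-c,
   and the second by sum_k k^{-p} with p = 2 sigma_1+2 sigma_2+sigma_3-2c; the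
   hypotheses leave room for such a c with p > 1.  The p-series converges by the
   telescoping bound (b - a) b^{-c} <= (a^{1-c} - b^{1-c}) / (c - 1). *)

Lemma sumR_le l f g : (forall x, In x l -> f x <= g x) -> sumR l f <= sumR l g.
Proof.
  induction l as [|a l IH]; intros Hfg; unfold sumR in *; simpl; [lra|].
  apply Rplus_le_compat; [apply Hfg; left; reflexivity|].
  apply IH; intros x Hx; apply Hfg; right; exact Hx.
Qed.

Lemma sumR_ge0 l f : (forall x, In x l -> 0 <= f x) -> 0 <= sumR l f.
Proof.
  induction l as [|a l IH]; intros Hf; unfold sumR in *; simpl; [lra|].
  assert (0 <= f a) by (apply Hf; left; reflexivity).
  assert (0 <= fold_right Rplus 0 (map f l)) by (apply IH; intros x Hx; apply Hf; right; exact Hx).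
  lra.
Qed.

Lemma sumR_scal_l l f k : sumR l (fun x => k * f x) = k * sumR l f.
Proof. induction l as [|a l IH]; unfold sumR in *; simpl; [ring|rewrite IH; ring]. Qed.

Lemma sumR_filter_le l p f :
  (forall x, In x l -> 0 <= f x) -> sumR (filter p l) f <= sumR l f.
Proof.
  induction l as [|a l IH]; intros Hf; unfold sumR in *; simpl; [lra|].
  assert (0 <= f a) by (apply Hf; left; reflexivity).
  assert (fold_right Rplus 0 (map f (filter p l)) <= fold_right Rplus 0 (map f l))
    by (apply IH; intros x Hx; apply Hf; right; exact Hx).
  destruct (p a); simpl; lra.
Qed.

Lemma sumR_seq_S a n f : sumR (seq a (S n)) f = sumR (seq a n) f + f (a + n)%nat.
Proof.
  rewrite seq_S; unfold sumR; rewrite map_app, fold_right_app; simpl.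
  induction (map f (seq a n)) as [|x l IH]; simpl; [ring|rewrite IH; ring].
Qed.

Lemma sumR_seq_reflect N f : sumR (seq 1 N) (fun m => f (S N - m)%nat) = sumR (seq 1 N) f.
Proof.
  induction N as [|N IH]; [reflexivity|].
  rewrite (sumR_seq_S 1 N f), <- IH.
  change (seq 1 (S N)) with (1 :: seq 2 N)%nat; rewrite <- seq_shift.
  unfold sumR; rewrite map_cons, map_map; cbn [fold_right].
  replace (S (S N) - 1)%nat with (1 + N)%nat by lia.
  rewrite Rplus_comm; reflexivity.
Qed.

Lemma Cmod_sumC_le l f : Cmod (sumC l f) <= sumR l (fun x => Cmod (f x)).
Proof.
  induction l as [|a l IH]; unfold sumR, sumC in *; simpl; [rewrite Cmod_0; lra|].
  eapply Rle_trans; [apply Cmod_triangle | lra].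
Qed.

Lemma Rpower_pos x y : 0 < Rpower x y.
Proof. apply exp_pos. Qed.

Lemma Cmod_cpow n s : Cmod (cpow n s) = Rpower (INR n) (Re s).
Proof.
  unfold cpow, Cmod, Rpower; simpl fst; simpl snd.
  set (E := exp (Re s * ln (INR n))); set (T := Im s * ln (INR n)).
  assert (HE : (E * cos T) ^ 2 + (E * sin T) ^ 2 = E ^ 2).
  { pose proof (sin2_cos2 T) as H; unfold Rsqr in H; nra. }
  rewrite HE; apply sqrt_pow2; left; apply exp_pos.
Qed.

Lemma Cmod_cpow_opp n s : Cmod (cpow n (Copp s)) = Rpower (INR n) (- Re s).
Proof. exact (Cmod_cpow n (Copp s)). Qed.

Lemma Rpower_le_comparable a b x : 0 < a -> 0 < b -> a <= 2 * b -> b <= 2 * a ->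
  Rpower a x <= Rpower 2 (Rabs x) * Rpower b x.
Proof.
  intros Ha Hb Hab Hba; unfold Rpower; rewrite <- exp_plus.
  assert (Hd : Rabs (ln a - ln b) <= ln 2).
  { assert (ln a <= ln 2 + ln b) by (rewrite <- ln_mult by lra; apply ln_le; lra).
    assert (ln b <= ln 2 + ln a) by (rewrite <- ln_mult by lra; apply ln_le; lra).
    apply Rabs_le; lra. }
  assert (Hx : x * (ln a - ln b) <= Rabs x * ln 2).
  { eapply Rle_trans; [apply Rle_abs|]; rewrite Rabs_mult.
    apply Rmult_le_compat_l; [apply Rabs_pos | exact Hd]. }
  assert (Hle : x * ln a <= Rabs x * ln 2 + x * ln b) by lra.
  destruct (Rle_lt_or_eq_dec _ _ Hle) as [Hlt | ->]; [left; apply exp_increasing, Hlt | lra].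
Qed.

Lemma Rpower_nat_comparable m n x : (1 <= m)%nat -> (1 <= n)%nat ->
  (m <= 2 * n)%nat -> (n <= 2 * m)%nat ->
  Rpower (INR m) x <= Rpower 2 (Rabs x) * Rpower (INR n) x.
Proof.
  intros Hm Hn Hmn Hnm; apply Rpower_le_comparable; try (apply lt_0_INR; lia);
    [apply le_INR in Hmn | apply le_INR in Hnm]; rewrite mult_INR in *; simpl in *; lra.
Qed.

Lemma Rpower_le_shift a b x y : 0 < a <= b -> x <= y ->
  Rpower a (- x) <= Rpower a (- y) * Rpower b (y - x).
Proof.
  intros Hab Hxy; replace (- x) with (- y + (y - x)) by ring; rewrite Rpower_plus.
  apply Rmult_le_compat_l; [left; apply Rpower_pos | apply Rle_Rpower_l; lra].
Qed.

(* From ln (a/b) <= a/b - 1 and e^t >= 1 + t. *)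
Lemma Rpower_telescope a b c : 1 < c -> 0 < a <= b ->
  (b - a) * Rpower b (- c) <= (Rpower a (1 - c) - Rpower b (1 - c)) / (c - 1).
Proof.
  intros Hc [Ha Hab]; set (u := Rpower b (1 - c)); set (D := ln b - ln a).
  assert (Hu : 0 < u) by apply Rpower_pos.
  assert (HD : (b - a) / b <= D).
  { pose proof (exp_ineq1_le (ln (a / b))) as H.
    rewrite exp_ln, ln_div in H by (try apply Rdiv_lt_0_compat; lra).
    unfold D; replace ((b - a) / b) with (1 - a / b) by (field; lra); lra. }
  assert (Ea : Rpower a (1 - c) = u * exp ((c - 1) * D)).
  { unfold u, Rpower, D; rewrite <- exp_plus; f_equal; ring. }
  assert (Eb : Rpower b (- c) = u * / b).
  { unfold u; replace (- c) with (1 - c + - (1)) by ring.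
    rewrite Rpower_plus, Rpower_Ropp, Rpower_1 by lra; reflexivity. }
  pose proof (exp_ineq1_le ((c - 1) * D)) as He.
  rewrite Ea, Eb; apply (Rmult_le_reg_r (c - 1)); [lra|].
  replace ((u * exp ((c - 1) * D) - u) / (c - 1) * (c - 1)) with (u * (exp ((c - 1) * D) - 1))
    by (field; lra).
  replace ((b - a) * (u * / b) * (c - 1)) with (u * ((c - 1) * ((b - a) / b))) by (field; lra).
  apply Rmult_le_compat_l; [lra | nra].
Qed.

Lemma sumR_Rpower_telescoping c N : 1 < c -> (1 <= N)%nat ->
  sumR (seq 1 N) (fun n => Rpower (INR n) (- c)) + Rpower (INR N) (1 - c) / (c - 1)
  <= c / (c - 1).
Proof.
  intros Hc HN; induction HN as [|N HN IH].
  - unfold sumR; simpl; unfold Rpower; rewrite ln_1, !Rmult_0_r, exp_0.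
    replace (c / (c - 1)) with (1 + 1 / (c - 1)) by (field; lra); lra.
  - rewrite sumR_seq_S; replace (1 + N)%nat with (S N) by lia.
    pose proof (Rpower_telescope (INR N) (INR (S N)) c Hc) as H.
    rewrite S_INR in *; replace (INR N + 1 - INR N) with 1 in H by ring.
    assert (0 < INR N) by (apply lt_0_INR; lia).
    specialize (H ltac:(lra)); unfold Rdiv in *; lra.
Qed.

Lemma sumR_Rpower_le c N : 1 < c ->
  sumR (seq 1 N) (fun n => Rpower (INR n) (- c)) <= c / (c - 1).
Proof.
  intros Hc; destruct N as [|N].
  - unfold sumR; simpl; left; apply Rdiv_lt_0_compat; lra.
  - pose proof (sumR_Rpower_telescoping c (S N) Hc ltac:(lia)).
    assert (0 < Rpower (INR (S N)) (1 - c) / (c - 1))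
      by (apply Rdiv_lt_0_compat; [apply Rpower_pos | lra]).
    lra.
Qed.

Lemma sumR_Rpower_shift_le b c N M : 1 < c -> b <= c -> (N <= M)%nat ->
  sumR (seq 1 N) (fun n => Rpower (INR n) (- b)) <= Rpower (INR M) (c - b) * (c / (c - 1)).
Proof.
  intros Hc Hbc HNM.
  apply Rle_trans with (sumR (seq 1 N) (fun n => Rpower (INR M) (c - b) * Rpower (INR n) (- c))).
  - apply sumR_le; intros n Hn; apply in_seq in Hn; rewrite Rmult_comm.
    apply Rpower_le_shift; [split; [apply lt_0_INR | apply le_INR]; lia | exact Hbc].
  - rewrite sumR_scal_l; apply Rmult_le_compat_l; [left; apply Rpower_pos|].
    apply sumR_Rpower_le; exact Hc.
Qed.

Lemma ex_series_nonneg_bounded (a : nat -> R) B :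
  (forall n, 0 <= a n) -> (forall N, sum_f_R0 a N <= B) -> ex_series a.
Proof.
  intros Ha HB; apply ex_series_Reals_1, growing_cv.
  - intros n; simpl; specialize (Ha (S n)); lra.
  - exists B; intros x [n ->]; apply HB.
Qed.

Lemma ex_series_le_nonneg (a b : nat -> R) :
  (forall n, 0 <= a n <= b n) -> ex_series b -> ex_series a.
Proof.
  intros Hab; apply (@ex_series_le R_AbsRing R_CompleteNormedModule); intros n.
  change (Rabs (a n) <= b n); rewrite Rabs_pos_eq; apply Hab.
Qed.

Lemma sum_f_R0_sumR g N : sum_f_R0 (fun i => g (S i)) N = sumR (seq 1 (S N)) g.
Proof.
  induction N as [|N IH]; [unfold sumR; simpl; ring|].
  simpl sum_f_R0; rewrite IH, (sumR_seq_S 1 (S N)); reflexivity.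
Qed.

Lemma ex_series_Rpower_S p : 1 < p -> ex_series (fun n => Rpower (INR (S n)) (- p)).
Proof.
  intros Hp; apply ex_series_nonneg_bounded with (p / (p - 1)).
  - intros n; left; apply Rpower_pos.
  - intros N; rewrite (sum_f_R0_sumR (fun n => Rpower (INR n) (- p))).
    apply sumR_Rpower_le; exact Hp.
Qed.

Lemma exists_exponent_between x y : x < y -> 1 < y -> exists c, 1 < c /\ x <= c /\ c < y.
Proof.
  intros Hx H1; exists ((Rmax x 1 + y) / 2).
  pose proof (Rmax_l x 1); pose proof (Rmax_r x 1); pose proof (Rmax_lub_lt x 1 y Hx H1).
  lra.
Qed.

Lemma Cmod_term1_le s1 s2 s3 m n : (1 <= n < m)%nat ->
  Cmod (term1 s1 s2 s3 m n)
  <= Rpower 2 (Rabs (Re s3)) * Rpower (INR m) (- (Re s1 + Re s3)) * Rpower (INR n) (- Re s2).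
Proof.
  intros Hnm; unfold term1; rewrite !Cmod_mult, !Cmod_cpow_opp.
  pose proof (Rpower_nat_comparable (m + n) m (- Re s3)) as Hmn.
  rewrite Rabs_Ropp in Hmn; specialize (Hmn ltac:(lia) ltac:(lia) ltac:(lia) ltac:(lia)).
  rewrite Ropp_plus_distr, Rpower_plus.
  replace (_ * _ * Rpower (INR n) (- Re s2)) with
    (Rpower (INR m) (- Re s1) * Rpower (INR n) (- Re s2)
     * (Rpower 2 (Rabs (Re s3)) * Rpower (INR m) (- Re s3))) by ring.
  apply Rmult_le_compat_l; [|exact Hmn].
  apply Rmult_le_pos; left; apply Rpower_pos.
Qed.

Lemma sum_term1_le s1 s2 s3 c m : 1 < c -> Re s2 <= c ->
  sumR (below m) (fun n => Cmod (term1 s1 s2 s3 m n))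
  <= Rpower 2 (Rabs (Re s3)) * (c / (c - 1))
     * Rpower (INR m) (- (Re s1 + Re s2 + Re s3 - c)).
Proof.
  intros Hc Hs2; set (W := Rpower 2 (Rabs (Re s3)) * Rpower (INR m) (- (Re s1 + Re s3))).
  apply Rle_trans with (sumR (below m) (fun n => W * Rpower (INR n) (- Re s2))).
  { apply sumR_le; intros n Hn; apply in_seq in Hn; apply Cmod_term1_le; lia. }
  rewrite sumR_scal_l.
  pose proof (sumR_Rpower_shift_le (Re s2) c (m - 1) m Hc Hs2 ltac:(lia)) as Hsum.
  replace (- (Re s1 + Re s2 + Re s3 - c)) with (- (Re s1 + Re s3) + (c - Re s2)) by ring.
  rewrite Rpower_plus.
  replace (_ * _ * _) with (W * (Rpower (INR m) (c - Re s2) * (c / (c - 1))))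
    by (unfold W; ring).
  apply Rmult_le_compat_l; [|exact Hsum].
  apply Rmult_le_pos; left; apply Rpower_pos.
Qed.

Lemma ex_series_sum_term1 s1 s2 s3 c : 1 < c -> Re s2 <= c -> 1 < Re s1 + Re s2 + Re s3 - c ->
  ex_series (fun i : nat => let m := (i + 1)%nat in
               sumR (below m) (fun n => Cmod (term1 s1 s2 s3 m n))).
Proof.
  intros Hc Hs2 Hp.
  apply ex_series_le_nonneg with (fun i => Rpower (INR (S i)) (- (Re s1 + Re s2 + Re s3 - c))
                                          * (Rpower 2 (Rabs (Re s3)) * (c / (c - 1)))).
  - intros i; cbv zeta; rewrite Nat.add_1_r; split.
    + apply sumR_ge0; intros; apply Cmod_ge_0.
    + rewrite Rmult_comm; apply sum_term1_le; assumption.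
  - apply ex_series_scal_r, ex_series_Rpower_S; exact Hp.
Qed.

Lemma Cmod_inner2_le_sum s1 s2 k :
  Cmod (inner2 s1 s2 k)
  <= Rpower 2 (Rabs (Re s1)) * Rpower (INR k) (- Re s1)
     * sumR (seq 1 (k - 1)) (fun n => Rpower (INR n) (- Re s2)).
Proof.
  set (W := Rpower 2 (Rabs (Re s1)) * Rpower (INR k) (- Re s1)).
  assert (HW : 0 <= W) by (apply Rmult_le_pos; left; apply Rpower_pos).
  eapply Rle_trans; [apply Cmod_sumC_le|].
  apply Rle_trans with (sumR (half_range k) (fun m => W * Rpower (INR (S (k - 1) - m)) (- Re s2))).
  { apply sumR_le; intros m Hm; unfold half_range in Hm.
    apply filter_In in Hm as [Hm Hkm]; apply in_seq in Hm; apply Nat.ltb_lt in Hkm.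
    rewrite Cmod_mult, !Cmod_cpow_opp; replace (S (k - 1) - m)%nat with (k - m)%nat by lia.
    apply Rmult_le_compat_r; [left; apply Rpower_pos|].
    pose proof (Rpower_nat_comparable m k (- Re s1)) as Hmk.
    rewrite Rabs_Ropp in Hmk; apply Hmk; lia. }
  rewrite <- (sumR_seq_reflect (k - 1)), <- sumR_scal_l.
  apply sumR_filter_le; intros m _; apply Rmult_le_pos; [exact HW | left; apply Rpower_pos].
Qed.

Lemma Cmod_inner2_le s1 s2 c k : 1 < c -> Re s2 <= c ->
  Cmod (inner2 s1 s2 k)
  <= Rpower 2 (Rabs (Re s1)) * (c / (c - 1)) * Rpower (INR k) (c - Re s1 - Re s2).
Proof.
  intros Hc Hs2; eapply Rle_trans; [apply Cmod_inner2_le_sum|].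
  pose proof (sumR_Rpower_shift_le (Re s2) c (k - 1) k Hc Hs2 ltac:(lia)) as Hsum.
  replace (c - Re s1 - Re s2) with (- Re s1 + (c - Re s2)) by ring; rewrite Rpower_plus.
  replace (_ * _ * (_ * _)) with
    (Rpower 2 (Rabs (Re s1)) * Rpower (INR k) (- Re s1)
     * (Rpower (INR k) (c - Re s2) * (c / (c - 1)))) by ring.
  apply Rmult_le_compat_l; [|exact Hsum].
  apply Rmult_le_pos; left; apply Rpower_pos.
Qed.

Lemma Cmod_term2_le s1 s2 s3 c k : 1 < c -> Re s2 <= c ->
  Cmod (term2 s1 s2 s3 k)
  <= (Rpower 2 (Rabs (Re s1)) * (c / (c - 1))) ^ 2
     * Rpower (INR k) (- (2 * Re s1 + 2 * Re s2 + Re s3 - 2 * c)).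
Proof.
  intros Hc Hs2; unfold term2.
  rewrite Cmod_mult, Cmod_R, Cmod_cpow_opp, Rabs_pos_eq by (apply pow_le, Cmod_ge_0).
  set (A := Rpower 2 (Rabs (Re s1)) * (c / (c - 1))).
  set (E := Rpower (INR k) (c - Re s1 - Re s2)).
  assert (HX : Cmod (inner2 s1 s2 k) <= A * E) by (apply Cmod_inner2_le; assumption).
  replace (Rpower (INR k) (- (2 * Re s1 + 2 * Re s2 + Re s3 - 2 * c)))
    with (E * E * Rpower (INR k) (- Re s3))
    by (unfold E; rewrite <- !Rpower_plus; f_equal; ring).
  replace (A ^ 2 * (E * E * Rpower (INR k) (- Re s3)))
    with ((A * E) ^ 2 * Rpower (INR k) (- Re s3)) by ring.
  apply Rmult_le_compat_r; [left; apply Rpower_pos|].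
  apply pow_incr; split; [apply Cmod_ge_0 | exact HX].
Qed.

Lemma ex_series_term2 s1 s2 s3 c : 1 < c -> Re s2 <= c ->
  1 < 2 * Re s1 + 2 * Re s2 + Re s3 - 2 * c ->
  ex_series (fun i : nat => Cmod (term2 s1 s2 s3 (i + 2)%nat)).
Proof.
  intros Hc Hs2 Hp.
  set (p := 2 * Re s1 + 2 * Re s2 + Re s3 - 2 * c).
  set (A := Rpower 2 (Rabs (Re s1)) * (c / (c - 1))).
  apply ex_series_le_nonneg with (fun i => Rpower (INR (S (S i))) (- p) * A ^ 2).
  - intros i; replace (i + 2)%nat with (S (S i)) by lia; split; [apply Cmod_ge_0|].
    rewrite Rmult_comm; apply Cmod_term2_le; assumption.
  - apply (ex_series_incr_1 (fun n => Rpower (INR (S n)) (- p) * A ^ 2)).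
    apply ex_series_scal_r, ex_series_Rpower_S; exact Hp.
Qed.

Theorem theorem2p1 (s1 s2 s3 : C) :
  (Re s1 + Re s3 > 1 -> Re s1 + Re s2 + Re s3 > 2 ->
     ex_series (fun i : nat => let m := (i + 1)%nat in
                  sumR (below m) (fun n => Cmod (term1 s1 s2 s3 m n)))) /\
  (2 * Re s1 + Re s3 > 1 -> 2 * Re s1 + 2 * Re s2 + Re s3 > 3 ->
     ex_series (fun i : nat => Cmod (term2 s1 s2 s3 (i + 2)%nat))).
Proof.
  split; intros H1 H2.
  - destruct (exists_exponent_between (Re s2) (Re s1 + Re s2 + Re s3 - 1))
      as (c & Hc & Hs2 & Hcp); [lra | lra |].
    apply ex_series_sum_term1 with c; lra.
  - destruct (exists_exponent_between (Re s2) (Re s1 + Re s2 + (Re s3 - 1) / 2))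
      as (c & Hc & Hs2 & Hcp); [lra | lra |].
    apply ex_series_term2 with c; lra.
Qed.
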